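(* Let $\Sigma$ be a set of sp-implications such that every $\sigma\to\tau$ in $\Sigma$ satisfies: (i) every variable occurring in $\tau$ occurs in $\sigma$ exactly once; (ii) $|W_\tau|\ge 2$ and every point of every $\mathfrak v_\tau(p)$ is a leaf of $\mathfrak T_\tau$; (iii) $\mathfrak v_\tau(p)\cap\mathfrak v_\tau(q)=\emptyset$ whenever $p\neq q$. Then the spi-logic $\mathsf{SPi}+\Sigma$ is complex, and hence complete.
   Context: Fix a non-empty signature $\mathcal{R}$. Sp-formulas are built from propositional variables and $\top$ using $\wedge$ and unary diamonds $\Diamond_R$ ($R\in\mathcal R$); an sp-implication is $\sigma\to\tau$ with $\sigma,\tau$ sp-formulas. A SLO is an algebra $(A,\wedge,\top,\Diamond_R)_{R\in\mathcal R}$ where $(A,\wedge,\top)$ is a meet-semilattice with top $\top$ and each $\Diamond_R$ is monotone; it validates $\sigma\to\tau$ if $\sigma[\mathfrak a]\le\tau[\mathfrak a]$ for all valuations $\mathfrak a$. Frames $\mathfrak F=(W,R^{\mathfrak F})_{R\in\mathcal R}$ and validity of sp-implications in frames are as in standard Kripke semantics. $\Sigma\models_{\mathsf{Kr}}\iota$ (resp. $\Sigma\models_{\mathsf{SLO}}\iota$) means $\iota$ is valid in every frame (resp. SLO) validating $\Sigma$. The spi-logic $\mathsf{SPi}+\Sigma$ is $\{\iota\mid\Sigma\models_{\mathsf{SLO}}\iota\}$; it is complete if $\Sigma\models_{\mathsf{Kr}}\iota\iff\Sigma\models_{\mathsf{SLO}}\iota$ for all sp-implications $\iota$. For a frame $\mathfrak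 F$, $\mathfrak F^\star=(2^W,\cap,W,\Diamond^+_R)_R$ with $\Diamond_R^+X=\{w\mid\exists v\in X,(w,v)\in R^{\mathfrak F}\}$. A spi-logic $L$ is complex if every SLO validating $L$ embeds (injectively, preserving $\wedge,\top,\Diamond_R$) into $\mathfrak F^\star$ for some frame $\mathfrak F$ validating $L$. The tree model $\mathfrak M_\varrho=(\mathfrak T_\varrho,\mathfrak v_\varrho)$ of an sp-formula $\varrho$, with $\mathfrak T_\varrho=(W_\varrho,R_\varrho)_{R\in\mathcal R}$ a finite tree with root $r_\varrho$, is defined inductively: for $\varrho=\top$ it is a single irreflexive point with all variables false; for $\varrho=p$ a single irreflexive point $r_\varrho$ with $\mathfrak v_\varrho(p)=\{r_\varrho\}$ and all other variables false; for $\varrho=\varrho_1\wedge\varrho_2$ take disjoint $\mathfrak M_{\varrho_1},\mathfrak M_{\varrho_2}$ and merge their roots into $r_\varrho$, which satisfies a variable iff one of the merged roots did; for $\varrho=\Diamond_R\varrho'$ add a fresh point $r_\varrho$ to $\mathfrak M_{\varrho'}$ with a single new $R$-edge from $r_\varrho$ to $r_{\varrho'}$, valuation unchanged. A leaf is a point with no successor. *)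

From Stdlib Require Import Arith.

Set Implicit Arguments.

(* Propositional variables are natural numbers; Rel is the signature. *)
Inductive spf (Rel : Type) : Type :=
  | Var : nat -> spf Rel
  | Top : spf Rel
  | And : spf Rel -> spf Rel -> spf Rel
  | Dia : Rel -> spf Rel -> spf Rel.
Arguments Top {Rel}.
Arguments Var {Rel} _.

Definition spimp (Rel : Type) : Type := (spf Rel * spf Rel)%type.

Fixpoint occ (Rel : Type) (p : nat) (f : spf Rel) : nat :=
  match f with
  | Var q => if Nat.eqb p q then 1 else 0
  | Top => 0
  | And a b => occ p a + occ p b
  | Dia _ a => occ p a
  end.

Record SLO (Rel : Type) : Type := {
  car :> Type;
  meet : car -> car -> car;
  top : car;
  dia : Rel -> car -> car;
  meetA : forall x y z, meet x (meet y z) = meet (meet x y) z;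
  meetC : forall x y, meet x y = meet y x;
  meetI : forall x, meet x x = x;
  meetT : forall x, meet x top = x;
  dia_mono : forall r x y, meet x y = x -> meet (dia r x) (dia r y) = dia r x
}.

Definition sle (Rel : Type) (A : SLO Rel) (x y : A) : Prop := meet A x y = x.

Fixpoint sevl (Rel : Type) (A : SLO Rel) (a : nat -> A) (f : spf Rel) : A :=
  match f with
  | Var p => a p
  | Top => top A
  | And f1 f2 => meet A (sevl A a f1) (sevl A a f2)
  | Dia r f1 => dia A r (sevl A a f1)
  end.

Definition slo_valid (Rel : Type) (A : SLO Rel) (i : spimp Rel) : Prop :=
  forall a : nat -> A, sle A (sevl A a (fst i)) (sevl A a (snd i)).

Record frame (Rel : Type) : Type := {
  world : Type;
  facc : Rel -> world -> world -> Prop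
}.

Fixpoint ktrue (Rel : Type) (F : frame Rel) (V : nat -> world F -> Prop)
    (f : spf Rel) (w : world F) : Prop :=
  match f with
  | Var p => V p w
  | Top => True
  | And f1 f2 => ktrue F V f1 w /\ ktrue F V f2 w
  | Dia r f1 => exists v, facc F r w v /\ ktrue F V f1 v
  end.

Definition frame_valid (Rel : Type) (F : frame Rel) (i : spimp Rel) : Prop :=
  forall (V : nat -> world F -> Prop) (w : world F),
    ktrue F V (fst i) w -> ktrue F V (snd i) w.

Definition cons_Kr (Rel : Type) (Sigma : spimp Rel -> Prop) (i : spimp Rel) : Prop :=
  forall F : frame Rel, (forall j, Sigma j -> frame_valid F j) -> frame_valid F i.

Definition cons_SLO (Rel : Type) (Sigma : spimp Rel -> Prop) (i : spimp Rel) : Prop :=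
  forall A : SLO Rel, (forall j, Sigma j -> slo_valid A j) -> slo_valid A i.

Definition spi_logic (Rel : Type) (Sigma : spimp Rel -> Prop) : spimp Rel -> Prop :=
  fun i => cons_SLO Sigma i.

Definition spi_complete (Rel : Type) (Sigma : spimp Rel -> Prop) : Prop :=
  forall i, cons_Kr Sigma i <-> cons_SLO Sigma i.

(* embedding of an SLO into the complex algebra F^star = (2^W, cap, W, Dia^+) *)
Definition embeds_into_complex (Rel : Type) (A : SLO Rel) (F : frame Rel) : Prop :=
  exists f : A -> (world F -> Prop),
    (forall x y, (forall w, f x w <-> f y w) -> x = y) /\
    (forall x y w, f (meet A x y) w <-> (f x w /\ f y w)) /\
    (forall w, f (top A) w <-> True) /\
    (forall r x w, f (dia A r x) w <-> exists v, facc F r w v /\ f x v).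

Definition complex (Rel : Type) (L : spimp Rel -> Prop) : Prop :=
  forall A : SLO Rel, (forall i, L i -> slo_valid A i) ->
    exists F : frame Rel, (forall i, L i -> frame_valid F i) /\ embeds_into_complex A F.

(* non-root points of T_rho *)
Fixpoint nr (Rel : Type) (f : spf Rel) : Type :=
  match f with
  | Var _ => Empty_set
  | Top => Empty_set
  | And a b => (nr a + nr b)%type
  | Dia _ a => option (nr a)   (* None = root of the subtree *)
  end.

(* points of T_rho; None is the root r_rho *)
Definition tpt (Rel : Type) (f : spf Rel) : Type := option (nr f).

Definition emb_l (Rel : Type) (a b : spf Rel) (w : tpt a) : tpt (And a b) :=
  match w with None => None | Some x => Some (inl x) end.
Definition emb_r (Rel : Type) (a b : spf Rel) (w : tpt b) : tpt (And a b) :=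
  match w with None => None | Some x => Some (inr x) end.
Definition emb_d (Rel : Type) (r : Rel) (a : spf Rel) (w : tpt a) : tpt (Dia r a) :=
  Some w.

Fixpoint tacc {Rel : Type} (f : spf Rel) : Rel -> tpt f -> tpt f -> Prop :=
  match f return Rel -> tpt f -> tpt f -> Prop with
  | Var _ => fun _ _ _ => False
  | Top => fun _ _ _ => False
  | And a b => fun r u v =>
      (exists u' v', u = emb_l b u' /\ v = emb_l b v' /\ @tacc _ a r u' v') \/
      (exists u' v', u = emb_r a u' /\ v = emb_r a v' /\ @tacc _ b r u' v')
  | Dia r0 a => fun r u v =>
      (u = None /\ v = @emb_d _ r0 a None /\ r = r0) \/
      (exists u' v', u = @emb_d _ r0 a u' /\ v = @emb_d _ r0 a v' /\ @tacc _ a r u' v')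
  end.

Arguments tacc {Rel} f _ _ _.

Fixpoint tval {Rel : Type} (f : spf Rel) : nat -> tpt f -> Prop :=
  match f return nat -> tpt f -> Prop with
  | Var q => fun p u => p = q /\ u = None
  | Top => fun _ _ => False
  | And a b => fun p u =>
      (exists u', u = emb_l b u' /\ @tval _ a p u') \/
      (exists u', u = emb_r a u' /\ @tval _ b p u')
  | Dia r0 a => fun p u => exists u', u = @emb_d _ r0 a u' /\ @tval _ a p u'
  end.

Arguments tval {Rel} f _ _.

Definition tleaf (Rel : Type) (f : spf Rel) (w : tpt f) : Prop :=
  forall (r : Rel) (v : tpt f), ~ tacc f r w v.

Definition cond6p1 (Rel : Type) (i : spimp Rel) : Prop :=
  let sigma := fst i in let tau := snd i in
  (forall p, 0 < occ p tau -> occ p sigma = 1) /\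
  (exists w1 w2 : tpt tau, w1 <> w2) /\
  (forall p w, tval tau p w -> @tleaf Rel tau w) /\
  (forall p q w, p <> q -> ~ (tval tau p w /\ tval tau q w)).

From Stdlib Require Import Arith Lia Classical FunctionalExtensionality PropExtensionality.
Set Implicit Arguments.

(** Every SLO [A] embeds, via [x |-> {w | w <= x}], into the complex algebra of
    its canonical frame, whose worlds are the elements of [A] and where
    [c R_r d] iff [c <= Dia_r d]; so it suffices that this frame validates
    [Sigma].  Suppose [sigma] holds at [w] under [V].  Reading off witnesses
    gives a valuation [a] with [w <= sigma[a]] and [V p (a p)] for every [p]
    occurring exactly once in [sigma], in particular for every variable of
    [tau]; validity of [sigma -> tau] in [A] then yields [w <= tau[a]].  The
    shape conditions on [tau] say that labelled points of its tree are leaves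
    carrying a single variable and that the root is not labelled; then
    [w <= tau[a]] forces [tau] at [w], taking [tau'[a]] as the successor for
    a subformula [Dia_r tau'], and [a p] when [tau'] is a leaf labelled [p].
    Completeness follows because embeddings reflect validity. *)

Section Semilattice.
Variables (Rel : Type) (A : SLO Rel).

Lemma sle_refl (x : A) : sle A x x.
Proof. apply meetI. Qed.

Lemma sle_trans (x y z : A) : sle A x y -> sle A y z -> sle A x z.
Proof. unfold sle; intros Hxy Hyz. rewrite <- Hxy, <- meetA, Hyz. reflexivity. Qed.

Lemma sle_antisym (x y : A) : sle A x y -> sle A y x -> x = y.
Proof. unfold sle; intros Hxy Hyx. rewrite <- Hxy, meetC. exact Hyx. Qed.

Lemma sle_meet_l (x y : A) : sle A (meet A x y) x.
Proof. unfold sle. rewrite (meetC A (meet A x y) x), meetA, meetI. reflexivity. Qed.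

Lemma sle_meet_r (x y : A) : sle A (meet A x y) y.
Proof. unfold sle. rewrite <- meetA, meetI. reflexivity. Qed.

Lemma sle_meet_glb (c x y : A) : sle A c x -> sle A c y -> sle A c (meet A x y).
Proof. unfold sle; intros Hx Hy. rewrite meetA, Hx, Hy. reflexivity. Qed.

Lemma sle_top (x : A) : sle A x (top A).
Proof. apply meetT. Qed.

Lemma sle_dia (r : Rel) (x y : A) : sle A x y -> sle A (dia A r x) (dia A r y).
Proof. apply dia_mono. Qed.

Lemma sevl_sle_mono (f : spf Rel) (a1 a2 : nat -> A) :
  (forall p, 0 < occ p f -> sle A (a1 p) (a2 p)) ->
  sle A (sevl A a1 f) (sevl A a2 f).
Proof.
  revert a1 a2.
  induction f as [q| |f1 IH1 f2 IH2|r g IH]; intros a1 a2 Ha; simpl.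
  - apply Ha. simpl. rewrite Nat.eqb_refl. lia.
  - apply sle_refl.
  - apply sle_meet_glb.
    + eapply sle_trans; [apply sle_meet_l|]. apply IH1. intros p Hp; apply Ha; simpl; lia.
    + eapply sle_trans; [apply sle_meet_r|]. apply IH2. intros p Hp; apply Ha; simpl; lia.
  - apply sle_dia, IH. intros p Hp; apply Ha; simpl; lia.
Qed.

End Semilattice.

Section Shapes.
Variable Rel : Type.

Fixpoint unlabelled_root (f : spf Rel) : Prop :=
  match f with
  | Var _ => False
  | Top => True
  | And f1 f2 => unlabelled_root f1 /\ unlabelled_root f2
  | Dia _ _ => True
  end.

(* The tree of [f] is a single point, labelled by [p] or by nothing. *)
Fixpoint var_leaf (p : nat) (f : spf Rel) : Prop :=
  match f with
  | Var q => q = p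
  | Top => True
  | And f1 f2 => var_leaf p f1 /\ var_leaf p f2
  | Dia _ _ => False
  end.

Fixpoint labels_at_leaves (f : spf Rel) : Prop :=
  match f with
  | Var _ | Top => True
  | And f1 f2 => labels_at_leaves f1 /\ labels_at_leaves f2
  | Dia _ g => labels_at_leaves g /\ (unlabelled_root g \/ exists p, var_leaf p g)
  end.

Lemma var_leaf_ktrue (F : frame Rel) (V : nat -> world F -> Prop) p f x :
  var_leaf p f -> (0 < occ p f -> V p x) -> ktrue F V f x.
Proof.
  induction f as [q| |f1 IH1 f2 IH2|r g IH]; simpl; intros Hf Hx.
  - subst. apply Hx. rewrite Nat.eqb_refl. lia.
  - exact I.
  - destruct Hf. split; [apply IH1|apply IH2]; auto; intros; apply Hx; lia.
  - contradiction.
Qed.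

Lemma var_leaf_sevl_le (A : SLO Rel) (a : nat -> A) p f :
  var_leaf p f -> 0 < occ p f -> sle A (sevl A a f) (a p).
Proof.
  induction f as [q| |f1 IH1 f2 IH2|r g IH]; simpl; intros Hf Hocc.
  - subst. apply sle_refl.
  - lia.
  - destruct Hf as [Hf1 Hf2]. destruct (Nat.eq_dec (occ p f1) 0).
    + eapply sle_trans; [apply sle_meet_r|]. apply IH2; auto; lia.
    + eapply sle_trans; [apply sle_meet_l|]. apply IH1; auto; lia.
  - contradiction.
Qed.

Lemma root_has_successor (f : spf Rel) : nr f -> exists r v, tacc f r None v.
Proof.
  induction f as [q| |f1 IH1 f2 IH2|r0 g IH]; simpl; intros x.
  - destruct x.
  - destruct x.
  - destruct x as [x|x].
    + destruct (IH1 x) as [r [v Hv]]. exists r, (emb_l f2 v). left. exists None, v. auto.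
    + destruct (IH2 x) as [r [v Hv]]. exists r, (emb_r f1 v). right. exists None, v. auto.
  - exists r0, (Some None). left. auto.
Qed.

Lemma unlabelled_root_of_tval (f : spf Rel) :
  (forall p, ~ tval f p None) -> unlabelled_root f.
Proof.
  induction f as [q| |f1 IH1 f2 IH2|r0 g IH]; simpl; intros Hf; auto.
  - apply (Hf q). auto.
  - split.
    + apply IH1. intros p Hp. apply (Hf p). left. exists None. auto.
    + apply IH2. intros p Hp. apply (Hf p). right. exists None. auto.
Qed.

Lemma var_leaf_of_tval (f : spf Rel) p :
  @tleaf Rel f None -> (forall q, q <> p -> ~ tval f q None) -> var_leaf p f.
Proof.
  unfold tleaf.
  induction f as [q| |f1 IH1 f2 IH2|r0 g IH]; simpl; intros Hleaf Hval; auto.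
  - destruct (Nat.eq_dec q p) as [|Hqp]; auto. exfalso. apply (Hval q Hqp). auto.
  - split.
    + apply IH1.
      * intros r v Hv. apply (Hleaf r (emb_l f2 v)). left. exists None, v. auto.
      * intros q Hq Hv. apply (Hval q Hq). left. exists None. auto.
    + apply IH2.
      * intros r v Hv. apply (Hleaf r (emb_r f1 v)). right. exists None, v. auto.
      * intros q Hq Hv. apply (Hval q Hq). right. exists None. auto.
  - apply (Hleaf r0 (Some None)). left. auto.
Qed.

Definition leaf_labelling (f : spf Rel) : Prop :=
  (forall p w, tval f p w -> @tleaf Rel f w) /\
  (forall p q w, p <> q -> ~ (tval f p w /\ tval f q w)).

Lemma leaf_labelling_pullback (f g : spf Rel) (e : tpt g -> tpt f) :
  (forall p w, tval g p w -> tval f p (e w)) ->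
  (forall r w v, tacc g r w v -> tacc f r (e w) (e v)) ->
  leaf_labelling f -> leaf_labelling g.
Proof.
  intros Hval Hacc [Hleaf Hdisj]. split.
  - intros p w Hw r v Hv. exact (Hleaf p (e w) (Hval p w Hw) r (e v) (Hacc r w v Hv)).
  - intros p q w Hpq [Hp Hq]. exact (Hdisj p q (e w) Hpq (conj (Hval p w Hp) (Hval q w Hq))).
Qed.

Lemma leaf_labelling_labels_at_leaves (f : spf Rel) :
  leaf_labelling f -> labels_at_leaves f.
Proof.
  induction f as [q| |f1 IH1 f2 IH2|r0 g IH]; simpl; intros Hf; auto.
  - split.
    + apply IH1. apply (leaf_labelling_pullback (@emb_l Rel f1 f2)); auto.
      * intros p w Hw. left. exists w. auto.
      * intros r w v Hv. left. exists w, v. auto.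
    + apply IH2. apply (leaf_labelling_pullback (@emb_r Rel f1 f2)); auto.
      * intros p w Hw. right. exists w. auto.
      * intros r w v Hv. right. exists w, v. auto.
  - assert (Hg : leaf_labelling g).
    { apply (leaf_labelling_pullback (@emb_d Rel r0 g)); auto.
      - intros p w Hw. exists w. auto.
      - intros r w v Hv. right. exists w, v. auto. }
    split; [apply IH, Hg|].
    destruct (classic (exists p, tval g p None)) as [[p Hp]|Hnone].
    + right. exists p. destruct Hg as [Hleaf Hdisj]. apply var_leaf_of_tval.
      * exact (Hleaf p None Hp).
      * intros q Hq Hv. exact (Hdisj q p None Hq (conj Hv Hp)).
    + left. apply unlabelled_root_of_tval. intros p Hp. eauto.
Qed.

End Shapes.

Lemma cond6p1_leaf_labelling (Rel : Type) (i : spimp Rel) :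
  cond6p1 i -> leaf_labelling (snd i).
Proof. intros [_ [_ [Hleaf Hdisj]]]. split; assumption. Qed.

Lemma cond6p1_unlabelled_root (Rel : Type) (i : spimp Rel) :
  cond6p1 i -> unlabelled_root (snd i).
Proof.
  intros [_ [[w1 [w2 Hw]] [Hleaf _]]].
  assert (x : nr (snd i)).
  { destruct w1 as [x|]; [exact x|]. destruct w2 as [x|]; [exact x|]. contradiction. }
  apply unlabelled_root_of_tval. intros p Hp.
  destruct (root_has_successor _ x) as [r [v Hv]]. exact (Hleaf p None Hp r v Hv).
Qed.

Section CanonicalFrame.
Variables (Rel : Type) (A : SLO Rel).

Definition canonical_frame : frame Rel :=
  {| world := car A; facc := fun r c d => sle A c (dia A r d) |}.

Lemma canonical_frame_embeds : embeds_into_complex A canonical_frame.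
Proof.
  exists (fun x (w : A) => sle A w x). split; [|split; [|split]].
  - intros x y Hxy. apply sle_antisym; apply Hxy, sle_refl.
  - intros x y w. split.
    + intros H. split; (eapply sle_trans; [exact H|]); [apply sle_meet_l|apply sle_meet_r].
    + intros [Hx Hy]. apply sle_meet_glb; assumption.
  - intros w. split; [auto|]. intros _. apply sle_top.
  - intros r x w. simpl. split.
    + intros H. exists x. split; [exact H|apply sle_refl].
    + intros [v [Hwv Hvx]]. eapply sle_trans; [exact Hwv|]. apply sle_dia, Hvx.
Qed.

(* On [And], [a] takes [a1] on the variables of the left conjunct only, [a2] on
   those of the right conjunct only, and [top] on shared ones. *)
Lemma canonical_ktrue_sle_sevl (V : nat -> world canonical_frame -> Prop) (f : spf Rel)
    (w : A) :
  ktrue canonical_frame V f w ->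
  exists a : nat -> A, sle A w (sevl A a f) /\ (forall p, occ p f = 1 -> V p (a p)).
Proof.
  revert w.
  induction f as [q| |f1 IH1 f2 IH2|r g IH]; intros w Hw; simpl in Hw.
  - exists (fun _ => w). split; [apply sle_refl|].
    intros p; simpl. destruct (Nat.eqb_spec p q); [subst; auto|discriminate].
  - exists (fun _ => top A). split; [apply sle_top|]. simpl; discriminate.
  - destruct Hw as [H1 H2].
    destruct (IH1 _ H1) as [a1 [Hle1 HV1]]. destruct (IH2 _ H2) as [a2 [Hle2 HV2]].
    exists (fun p => if Nat.eqb (occ p f2) 0 then a1 p
                     else if Nat.eqb (occ p f1) 0 then a2 p else top A).
    split.
    + simpl. apply sle_meet_glb.
      * eapply sle_trans; [exact Hle1|]. apply sevl_sle_mono. intros p Hp.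
        destruct (Nat.eqb_spec (occ p f2) 0); [apply sle_refl|].
        destruct (Nat.eqb_spec (occ p f1) 0); [lia|apply sle_top].
      * eapply sle_trans; [exact Hle2|]. apply sevl_sle_mono. intros p Hp.
        destruct (Nat.eqb_spec (occ p f2) 0); [lia|].
        destruct (Nat.eqb_spec (occ p f1) 0); [apply sle_refl|apply sle_top].
    + intros p Hp; simpl in Hp.
      destruct (Nat.eqb_spec (occ p f2) 0); [apply HV1; lia|].
      destruct (Nat.eqb_spec (occ p f1) 0); [apply HV2; lia|lia].
  - destruct Hw as [v [Hwv Hv]]. destruct (IH _ Hv) as [a [Hle HV]].
    exists a. split; [|exact HV]. simpl.
    eapply sle_trans; [exact Hwv|]. apply sle_dia, Hle.
Qed.

Lemma canonical_ktrue_of_sle_sevl (V : nat -> world canonical_frame -> Prop)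
    (a : nat -> A) (f : spf Rel) :
  labels_at_leaves f -> unlabelled_root f ->
  (forall p, 0 < occ p f -> V p (a p)) ->
  forall c, sle A c (sevl A a f) -> ktrue canonical_frame V f c.
Proof.
  induction f as [q| |f1 IH1 f2 IH2|r g IH]; simpl; intros Hf Hroot HV c Hc.
  - contradiction.
  - exact I.
  - destruct Hf, Hroot. split.
    + apply IH1; auto; [intros p Hp; apply HV; lia|].
      eapply sle_trans; [exact Hc|apply sle_meet_l].
    + apply IH2; auto; [intros p Hp; apply HV; lia|].
      eapply sle_trans; [exact Hc|apply sle_meet_r].
  - destruct Hf as [Hg [Hgroot|[p Hleaf]]].
    + exists (sevl A a g). split; [exact Hc|].
      apply IH; auto. apply sle_refl.
    + destruct (Nat.eq_dec (occ p g) 0) as [Hocc|Hocc].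
      * exists (sevl A a g). split; [exact Hc|].
        eapply var_leaf_ktrue; [exact Hleaf|lia].
      * exists (a p). split.
        -- eapply sle_trans; [exact Hc|]. apply sle_dia, var_leaf_sevl_le; auto; lia.
        -- eapply var_leaf_ktrue; [exact Hleaf|]. intros _. apply HV. lia.
Qed.

Lemma canonical_frame_valid (i : spimp Rel) :
  cond6p1 i -> slo_valid A i -> frame_valid canonical_frame i.
Proof.
  intros Hcond HA V w Hw.
  destruct (canonical_ktrue_sle_sevl V (fst i) w Hw) as [a [Hle HV]].
  apply (canonical_ktrue_of_sle_sevl V a).
  - exact (leaf_labelling_labels_at_leaves (cond6p1_leaf_labelling Hcond)).
  - exact (cond6p1_unlabelled_root Hcond).
  - intros p Hp. apply HV. destruct Hcond as [Hocc _]. exact (Hocc p Hp).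
  - eapply sle_trans; [exact Hle|apply HA].
Qed.

End CanonicalFrame.

Section ComplexAlgebra.
Variables (Rel : Type) (F : frame Rel).

Lemma pred_ext (X Y : world F -> Prop) : (forall w, X w <-> Y w) -> X = Y.
Proof.
  intros H. apply functional_extensionality. intros w.
  apply propositional_extensionality, H.
Qed.

Definition complex_algebra : SLO Rel.
Proof.
  refine {| car := world F -> Prop;
            meet := fun X Y w => X w /\ Y w;
            top := fun _ => True;
            dia := fun r X w => exists v, facc F r w v /\ X v |}.
  1-4: intros; apply pred_ext; intros; tauto.
  intros r X Y HXY. apply pred_ext. intros w. rewrite <- HXY. firstorder.
Defined.

Lemma complex_algebra_sevl (a : nat -> world F -> Prop) (f : spf Rel) (w : world F) :
  sevl complex_algebra a f w <-> ktrue F a f w.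
Proof.
  revert w; induction f as [q| |f1 IH1 f2 IH2|r g IH]; simpl; intros w.
  - tauto.
  - tauto.
  - rewrite IH1, IH2. tauto.
  - split; intros [v [Hwv Hv]]; exists v; split; auto; apply IH; auto.
Qed.

Lemma frame_valid_complex_algebra (i : spimp Rel) :
  frame_valid F i <-> slo_valid complex_algebra i.
Proof.
  split.
  - intros HF a. apply pred_ext. intros w. simpl.
    rewrite !complex_algebra_sevl. specialize (HF a w). tauto.
  - intros HA V w Hw. apply complex_algebra_sevl. apply complex_algebra_sevl in Hw.
    rewrite <- (HA V) in Hw. apply Hw.
Qed.

End ComplexAlgebra.

Lemma cons_SLO_sound (Rel : Type) (Sigma : spimp Rel -> Prop) (F : frame Rel) i :
  (forall j, Sigma j -> frame_valid F j) -> cons_SLO Sigma i -> frame_valid F i.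
Proof.
  intros HF H. apply frame_valid_complex_algebra, H.
  intros j Hj. apply frame_valid_complex_algebra, HF, Hj.
Qed.

Lemma embedding_sevl (Rel : Type) (A : SLO Rel) (F : frame Rel) (e : A -> world F -> Prop) :
  (forall x y w, e (meet A x y) w <-> (e x w /\ e y w)) ->
  (forall w, e (top A) w <-> True) ->
  (forall r x w, e (dia A r x) w <-> exists v, facc F r w v /\ e x v) ->
  forall (a : nat -> A) f w, e (sevl A a f) w <-> ktrue F (fun p => e (a p)) f w.
Proof.
  intros Hmeet Htop Hdia a f.
  induction f as [q| |f1 IH1 f2 IH2|r g IH]; simpl; intros w.
  - tauto.
  - apply Htop.
  - rewrite Hmeet, IH1, IH2. tauto.
  - rewrite Hdia. split; intros [v [Hwv Hv]]; exists v; split; auto; apply IH; auto.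
Qed.

Lemma slo_valid_of_embeds (Rel : Type) (A : SLO Rel) (F : frame Rel) (i : spimp Rel) :
  embeds_into_complex A F -> frame_valid F i -> slo_valid A i.
Proof.
  intros [e [Hinj [Hmeet [Htop Hdia]]]] HF a. apply Hinj. intros w.
  rewrite Hmeet, !(embedding_sevl A F e Hmeet Htop Hdia). specialize (HF (fun p => e (a p)) w). tauto.
Qed.

Lemma complex_spi_complete (Rel : Type) (Sigma : spimp Rel -> Prop) :
  complex (spi_logic Sigma) -> spi_complete Sigma.
Proof.
  intros Hcx i. split.
  - intros HK A HA. destruct (Hcx A) as [F [HF Hemb]].
    + intros j Hj. exact (Hj A HA).
    + apply (slo_valid_of_embeds Hemb), HK.
      intros j Hj. apply HF. intros B HB. exact (HB j Hj).
  - intros H F HF. exact (cons_SLO_sound HF H).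
Qed.

Lemma complex_of_canonical_frame_valid (Rel : Type) (Sigma : spimp Rel -> Prop) :
  (forall A : SLO Rel, (forall j, Sigma j -> slo_valid A j) ->
     forall j, Sigma j -> frame_valid (canonical_frame A) j) ->
  complex (spi_logic Sigma).
Proof.
  intros Hcan A HA. exists (canonical_frame A). split; [|apply canonical_frame_embeds].
  intros i Hi. apply (cons_SLO_sound (Sigma := Sigma)); [|exact Hi].
  apply Hcan. intros j Hj. apply HA. intros B HB. exact (HB j Hj).
Qed.

Theorem theorem6p1 (Rel : Type) (HRel : inhabited Rel)
    (Sigma : spimp Rel -> Prop)
    (Hcond : forall i, Sigma i -> cond6p1 i) :
  complex (spi_logic Sigma) /\ spi_complete Sigma.
Proof.
  assert (Hcx : complex (spi_logic Sigma)).
  { apply complex_of_canonical_frame_valid. intros A HA j Hj.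
    exact (canonical_frame_valid (Hcond j Hj) (HA j Hj)). }
  split; [exact Hcx | exact (complex_spi_complete Hcx)].
Qed.
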